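(* Let $\mathcal H_S,\mathcal H_E$ be finite-dimensional complex Hilbert spaces, $\Psi\in\mathcal H_S\otimes\mathcal H_E$ a unit vector, and $\{\phi_j\}_{j\in\mathcal I}$ a finite family of unit vectors in $\mathcal H_S$ such that $\Psi\in\mathrm{span}\{\phi_j\}\otimes\mathcal H_E$ (equivalently, $\rho_S=\mathrm{Tr}_E|\Psi\rangle\langle\Psi|$ is described by the $\phi_j$). Suppose $\Pr(\phi_j)>0$ for all $j$ and that the $\{\phi_j\}$ are indistinguishable relative to $E$. Then $\Psi=\Psi_S\otimes\Lambda$ for unit vectors $\Psi_S\in\mathrm{span}\{\phi_j\}$, $\Lambda\in\mathcal H_E$; in particular $\rho_S=|\Psi_S\rangle\langle\Psi_S|$ is pure, with $\Psi_S=\sum_{s\in\mathcal I}\psi_s\phi_s$ for some coefficients $\psi_s$.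
   Context: For the pure joint state $\Psi$ and unit vectors $\phi\in\mathcal H_S$, $\eta\in\mathcal H_E$: $\Pr(\phi)=\langle\phi|\rho_S|\phi\rangle$ with $\rho_S=\mathrm{Tr}_E|\Psi\rangle\langle\Psi|$, $\Pr(\phi\wedge\eta)=|\langle\phi\otimes\eta|\Psi\rangle|^2$, and $\Pr(\eta\mid\phi)=\Pr(\phi\wedge\eta)/\Pr(\phi)$. The state of $S$ is ''described by'' $\{\phi_j\}$ iff $\rho_S=\sum_{t,t'}w_{tt'}|\phi_t\rangle\langle\phi_{t'}|$ for some coefficients $w_{tt'}$. Values $\{\phi_j\}$ are indistinguishable relative to $E$ iff $\Pr(\eta\mid\phi_j)$ is independent of $j$ for every unit vector $\eta\in\mathcal H_E$. *)

(* A vector Psi of H_S (x) H_E = C^n (x) C^m is its coefficient matrix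
   Psi : 'M[C]_(n, m), Psi i k = coefficient of e_i (x) f_k. *)
From HB Require Import structures.
From mathcomp Require Import all_boot all_order all_algebra.
Set Implicit Arguments. Unset Strict Implicit. Unset Printing Implicit Defensive.
Import Order.TTheory GRing.Theory Num.Theory.
Local Open Scope ring_scope.

Section Defs.
Variable C : numClosedFieldType.

Definition adjmx {p q : nat} (A : 'M[C]_(p, q)) : 'M[C]_(q, p) :=
  (map_mx (fun x => x^*) A)^T.

Definition dotv {n : nat} (u v : 'cV[C]_n) : C := \sum_i (u i 0)^* * v i 0.

Definition unit_vec {n : nat} (u : 'cV[C]_n) : Prop := dotv u u = 1.

Definition unit_state {n m : nat} (Psi : 'M[C]_(n, m)) : Prop :=
  \sum_i \sum_k (Psi i k)^* * Psi i k = 1.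

Definition tensor {n m : nat} (u : 'cV[C]_n) (v : 'cV[C]_m) : 'M[C]_(n, m) :=
  u *m v^T.

(* reduced density matrix rho_S = Tr_E |Psi><Psi| *)
Definition rhoS {n m : nat} (Psi : 'M[C]_(n, m)) : 'M[C]_n := Psi *m adjmx Psi.

Definition Pr {n m : nat} (Psi : 'M[C]_(n, m)) (phi : 'cV[C]_n) : C :=
  (adjmx phi *m rhoS Psi *m phi) 0 0.

Definition inner_tensor {n m : nat} (Psi : 'M[C]_(n, m))
  (phi : 'cV[C]_n) (eta : 'cV[C]_m) : C :=
  \sum_i \sum_k (phi i 0)^* * (eta k 0)^* * Psi i k.

Definition Pr_and {n m : nat} (Psi : 'M[C]_(n, m))
  (phi : 'cV[C]_n) (eta : 'cV[C]_m) : C :=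
  (inner_tensor Psi phi eta)^* * inner_tensor Psi phi eta.

Definition Pr_cond {n m : nat} (Psi : 'M[C]_(n, m))
  (eta : 'cV[C]_m) (phi : 'cV[C]_n) : C :=
  Pr_and Psi phi eta / Pr Psi phi.

Definition described_by {n m : nat} {I : finType} (Psi : 'M[C]_(n, m))
  (phi : I -> 'cV[C]_n) : Prop :=
  exists w : I -> I -> C,
    rhoS Psi = \sum_t \sum_t' w t t' *: (phi t *m adjmx (phi t')).

Definition in_span_tensor {n m : nat} {I : finType} (Psi : 'M[C]_(n, m))
  (phi : I -> 'cV[C]_n) : Prop :=
  exists c : I -> 'cV[C]_m, Psi = \sum_t tensor (phi t) (c t).

Definition indistinguishable {n m : nat} {I : finType} (Psi : 'M[C]_(n, m))
  (phi : I -> 'cV[C]_n) : Prop :=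
  forall eta : 'cV[C]_m, unit_vec eta ->
    forall j j' : I, Pr_cond Psi eta (phi j) = Pr_cond Psi eta (phi j').

End Defs.

From HB Require Import structures.
From mathcomp Require Import all_boot all_order all_algebra.
From mathcomp Require Import sesquilinear spectral.
Set Implicit Arguments.
Unset Strict Implicit.
Unset Printing Implicit Defensive.
Import Order.TTheory GRing.Theory Num.Theory Num.Def.
Local Open Scope ring_scope.
Local Open Scope sesquilinear_scope.

(* Write r_j := phi_j† Psi for the (unnormalised) relative state of E given
   phi_j, so that Pr(phi_j) = |r_j|^2 and Pr(phi_j /\ eta) = |<r_j, eta>|^2.
   Testing indistinguishability against eta = r_j0 / |r_j0| gives
   |<r_j, eta>|^2 = |r_j|^2 for every j: this is the equality case of
   Cauchy-Schwarz, so all r_j are multiples of one unit vector Lambda.  Then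
   Psi - Psi Lambda† Lambda lies in span{phi_j} (x) H_E and is orthogonal to
   every phi_j (x) H_E, hence vanishes: Psi = (Psi Lambda†) (x) Lambda. *)

Section DotForm.
Variables (C : numClosedFieldType) (U : vectType C) (form : {dot U for conjC}).
Local Notation "''[' u , v ]" := (form u v) : ring_scope.
Local Notation "''[' u ]" := (form u u) : ring_scope.

Lemma CauchySchwarz_eq_line u v :
  '[v] = 1 -> `|'[u, v]| ^+ 2 = '[u] -> u = '[u, v] *: v.
Proof.
move=> v1 uv_eq; have v_neq0 : v != 0 by rewrite -(dnorm_eq0 form) v1 oner_eq0.
have := (CauchySchwarz form u v).2; rewrite v1 mulr1 uv_eq eqxx.
rewrite free_cons span_seq1 seq1_free v_neq0 andbT negbK => /esym/vlineP[a ->].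
by rewrite linearZl_LR /= v1 mulr1.
Qed.

Definition normalized u := (sqrtC '[u])^-1 *: u.

Lemma dnorm_normalized u : u != 0 -> '[normalized u] = 1.
Proof.
move=> u_neq0; rewrite dnormZ ger0_norm ?invr_ge0 ?sqrtC_ge0 //.
by rewrite exprVn sqrtCK mulVf ?(dnorm_eq0 form).
Qed.

Lemma dot_normalized u : '[u, normalized u] = sqrtC '[u].
Proof.
rewrite linearZr_LR /= geC0_conj ?invr_ge0 ?sqrtC_ge0 //.
have [->|su_neq0] := eqVneq (sqrtC '[u]) 0; first by rewrite invr0 mul0r.
by rewrite -{2}[form u u]sqrtCK expr2 mulKf.
Qed.

End DotForm.

Section JointState.
Variable C : numClosedFieldType.
Local Notation "''[' u , v ]" := (dotmx u v) : ring_scope.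
Local Notation "''[' u ]" := (dotmx u u) : ring_scope.

Lemma adjmxE p q (A : 'M[C]_(p, q)) : adjmx A = A ^t*.
Proof. exact: map_trmx. Qed.

Lemma trmxC_mul p q r (A : 'M[C]_(p, q)) (B : 'M_(q, r)) :
  (A *m B) ^t* = B ^t* *m A ^t*.
Proof. by rewrite trmx_mul map_mxM. Qed.

Lemma dotmx_scalar n (u v : 'rV[C]_n) : u *m v ^t* = ('[u, v])%:M.
Proof. by rewrite dotmxE; apply: mx11_scalar. Qed.

Lemma dotvE n (u v : 'cV[C]_n) : dotv u v = '[v^T, u^T].
Proof. by rewrite dotmxE mxE; apply: eq_bigr => i _; rewrite !mxE mulrC. Qed.

Lemma mulmx_trmxC_eq0 p q (A : 'M[C]_(p, q)) : A *m A ^t* = 0 -> A = 0.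
Proof.
move=> AA0; apply/row_matrixP => i; rewrite row0.
have rowA0 : '[row i A] = (A *m A ^t*) i i.
  by rewrite dotmxE !mxE; apply: eq_bigr => k _; rewrite !mxE.
rewrite AA0 mxE in rowA0.
by apply/eqP; rewrite -(dnorm_eq0 (@dotmx C q)); apply/eqP.
Qed.

Variables (n m : nat).
Implicit Types (Psi Q : 'M[C]_(n, m)) (phi : 'cV[C]_n).

Definition relstate Psi phi : 'rV[C]_m := phi ^t* *m Psi.

Lemma Pr_relstate Psi phi : Pr Psi phi = '[relstate Psi phi].
Proof. by rewrite /Pr /rhoS dotmxE !adjmxE trmxC_mul trmxCK !mulmxA. Qed.

Lemma inner_tensor_relstate Psi phi (eta : 'cV_m) :
  inner_tensor Psi phi eta = '[relstate Psi phi, eta^T].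
Proof.
rewrite /inner_tensor dotmxE mxE exchange_big; apply: eq_bigr => k _.
by rewrite !mxE mulr_suml; apply: eq_bigr => i _; rewrite !mxE mulrAC.
Qed.

Lemma Pr_gt0_relstate Psi phi : (0 < Pr Psi phi) = (relstate Psi phi != 0).
Proof. by rewrite Pr_relstate -(dnorm_gt0 (@dotmx C m)). Qed.

Lemma Pr_and_relstate Psi phi (eta : 'cV_m) :
  Pr_and Psi phi eta = `|'[relstate Psi phi, eta^T]| ^+ 2.
Proof. by rewrite /Pr_and inner_tensor_relstate normCK mulrC. Qed.

Lemma Pr_cond_eq1_line Psi phi (L : 'rV_m) :
  '[L] = 1 -> Pr_cond Psi L^T phi = 1 ->
  relstate Psi phi = '[relstate Psi phi, L] *: L.
Proof.
rewrite /Pr_cond Pr_and_relstate Pr_relstate trmxK => L1.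
by move/divr1_eq; apply: CauchySchwarz_eq_line.
Qed.

Lemma Pr_cond_normalized Psi phi :
  0 < Pr Psi phi ->
  Pr_cond Psi (normalized (@dotmx C m) (relstate Psi phi))^T phi = 1.
Proof.
rewrite /Pr_cond Pr_and_relstate trmxK dot_normalized Pr_relstate => r_gt0.
by rewrite ger0_norm ?sqrtC_ge0 // sqrtCK divff ?lt0r_neq0.
Qed.

Lemma mxtrace_rhoS Psi :
  \tr (rhoS Psi) = \sum_i \sum_k (Psi i k)^* * Psi i k.
Proof.
apply: eq_bigr => i _; rewrite /rhoS adjmxE mxE.
by apply: eq_bigr => k _; rewrite !mxE mulrC.
Qed.

Lemma unit_vec_state (u : 'cV[C]_n) : unit_vec u = unit_state u.
Proof.
rewrite /unit_vec /unit_state /dotv; congr (_ = _).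
by apply: eq_bigr => i _; rewrite big_ord1.
Qed.

Lemma unit_state_neq0 Psi : unit_state Psi -> Psi != 0.
Proof.
rewrite /unit_state -mxtrace_rhoS => tr1; apply/eqP => Psi0.
by move: tr1; rewrite Psi0 /rhoS mul0mx mxtrace0 => /esym/eqP; rewrite oner_eq0.
Qed.

Lemma rhoS_mulmx_unitary p (A : 'M[C]_(n, p)) (V : 'M[C]_(p, m)) :
  V \is unitarymx -> rhoS (A *m V) = rhoS A.
Proof.
move/unitarymxP=> VV1.
by rewrite /rhoS !adjmxE trmxC_mul mulmxA -(mulmxA A) VV1 mulmx1.
Qed.

Lemma in_span_tensor_mulmx p Psi (I : finType) (phi : I -> 'cV_n)
    (M : 'M_(m, p)) :
  in_span_tensor Psi phi -> in_span_tensor (Psi *m M) phi.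
Proof.
case=> c ->; exists (fun t => M^T *m c t); rewrite mulmx_suml.
by apply: eq_bigr => t _; rewrite /tensor -mulmxA trmx_mul trmxK.
Qed.

Lemma in_span_tensor_col Psi (I : finType) (phi : I -> 'cV_n) (w : 'cV_m) :
  in_span_tensor Psi phi ->
  exists psi : I -> C, Psi *m w = \sum_s psi s *: phi s.
Proof.
case=> c ->; exists (fun s => ((c s)^T *m w) 0 0); rewrite mulmx_suml.
apply: eq_bigr => s _.
by rewrite /tensor -mulmxA {1}[_ *m w]mx11_scalar mul_mx_scalar.
Qed.

Lemma in_span_tensor_eq0 Q (I : finType) (phi : I -> 'cV_n) :
  in_span_tensor Q phi -> (forall t, relstate Q (phi t) = 0) -> Q = 0.
Proof.
move=> [c Qc] Q_orth; rewrite -[Q]trmxCK; apply/eqP.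
rewrite map_mx_eq0 trmx_eq0.
apply/eqP/mulmx_trmxC_eq0; rewrite trmxCK {2}Qc mulmx_sumr big1 // => t _.
have := Q_orth t; rewrite /relstate => phiQ0.
by rewrite /tensor mulmxA -[phi t]trmxCK -trmxC_mul phiQ0 trmx0 map_mx0 mul0mx.
Qed.

Lemma in_span_tensor_factor Psi (I : finType) (phi : I -> 'cV_n) (L : 'rV_m) :
  '[L] = 1 -> in_span_tensor Psi phi ->
  (forall t, relstate Psi (phi t) = '[relstate Psi (phi t), L] *: L) ->
  Psi = Psi *m L ^t* *m L.
Proof.
move=> L1 Psi_span Psi_line; apply/eqP; rewrite -subr_eq0; apply/eqP.
apply: (@in_span_tensor_eq0 _ _ phi).
  by rewrite -{1}[Psi]mulmx1 -!mulmxA -mulmxBr; apply: in_span_tensor_mulmx.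
move=> t; rewrite /relstate mulmxBr !mulmxA -/(relstate Psi (phi t)) Psi_line.
by rewrite -!scalemxAl dotmx_scalar L1 mul1mx subrr.
Qed.

End JointState.

Theorem theorem9 (C : numClosedFieldType) (n m : nat) (I : finType)
  (Psi : 'M[C]_(n, m)) (phi : I -> 'cV[C]_n) :
  unit_state Psi ->
  (forall j, unit_vec (phi j)) ->
  in_span_tensor Psi phi ->
  (forall j, 0 < Pr Psi (phi j)) ->
  indistinguishable Psi phi ->
  exists (PsiS : 'cV[C]_n) (Lambda : 'cV[C]_m) (psi : I -> C),
    [/\ unit_vec PsiS, unit_vec Lambda,
        PsiS = \sum_s psi s *: phi s,
        Psi = tensor PsiS Lambda
      & rhoS Psi = PsiS *m adjmx PsiS].
Proof.
move=> Psi1 _ Psi_span Pr_gt0 indist.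
case: (pickP (fun _ : I => true)) => [j0 _ | I_empty]; last first.
  by case: Psi_span (unit_state_neq0 Psi1) => c ->; rewrite big_pred0 ?eqxx.
pose L := normalized (@dotmx C m) (relstate Psi (phi j0)).
have L1 : dotmx L L = 1.
  by apply: dnorm_normalized; rewrite -Pr_gt0_relstate.
have L_unitary : L \is unitarymx by apply/unitarymxP; rewrite dotmx_scalar L1.
have Psi_line j : relstate Psi (phi j) = dotmx (relstate Psi (phi j)) L *: L.
  apply: Pr_cond_eq1_line => //; rewrite (indist L^T _ j j0).
    exact: Pr_cond_normalized.
  by rewrite /unit_vec dotvE trmxK.
have Psi_eq := in_span_tensor_factor L1 Psi_span Psi_line.
have [psi Psi_psi] := in_span_tensor_col (L ^t*) Psi_span.
exists (Psi *m L ^t*), L^T, psi; split => //.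
- rewrite unit_vec_state /unit_state -mxtrace_rhoS.
  by rewrite -(rhoS_mulmx_unitary _ L_unitary) -Psi_eq mxtrace_rhoS.
- by rewrite /unit_vec dotvE trmxK.
- by rewrite /tensor trmxK.
- by rewrite {1}Psi_eq rhoS_mulmx_unitary.
Qed.
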